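(* Let $T$ be a triangulation of an unpunctured bordered surface $(S,M)$, let $\Sigma_{Q_{\overline T}}=(\{x_1,\dots,x_n\},\{F_1,\dots,F_n\})$ be its associated LP seed, and let $i\in\{1,\dots,n\}$. Then $\hat F_i=F_i$ if and only if $F_i\neq F_j$ for every $j\neq i$.
   Context: $(S,M)$: compact surface (possibly non-orientable) with nonempty boundary, marked points $M\subset\partial S$ meeting every boundary component, no punctures, not a monogon/digon/triangle; boundary segments carry variables generating the coefficient ring $R$. Quasi-arcs: arcs (up to isotopy) not bounding a Möbius strip with one marked point, and one-sided simple closed curves; compatible = disjoint, or the unique arc and one-sided curve in a Möbius strip with one marked point. Triangulation: maximal compatible set containing no one-sided curve; $x_1,\dots,x_n$ correspond to its arcs. Double cover and quiver: replace each cross-cap by a cylinder to get $\tilde S$, glue two copies along the new cylinder boundaries by the antipodal map (two oppositely oriented copies if $S$ orientable); $T$ lifts to $\overline T$, each arc/boundary segment $i$ having lifts $i,\tilde i$. $Q_{\overline T}$: vertices arcs and boundary segments of $\overline T$; arrow $i\to j$ for each triangle in which $j$ follows $i$ in the orientation; 2-cycles cancelled; $b_{ij}$ = (arrows $i\to j$) $-$ (arrows $j\to i$). $F_j=\prod_{b_{ij}+b_{\tilde ij}>0}x_i^{b_{ij}+b_{\tilde ij}}+\prod_{b_{ij}+b_{\tilde ij}<0}x_i^{-(b_{ij}+b_{\tilde ij})}$ over twin-pair representatives $i$. Normalisation (Lam–Pylyavskyy): $\hat F_j=F_j/\prod_{k\neq j}x_k^{a_k}$ where $a_k\ge0$ is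 maximal such that $F_k^{a_k}$ divides $F_j|_{x_k\leftarrow F_k/x}$ in $R[x_1,\dots,x_{k-1},x^{\pm1},x_{k+1},\dots,x_n]$. *)

From HB Require Import structures.
From mathcomp Require Import all_boot all_order all_algebra.
From mathcomp Require Import mpoly fraction.
From Stdlib Require Import ClassicalEpsilon.

Set Implicit Arguments.
Unset Strict Implicit.
Unset Printing Implicit Defensive.

Import GRing.Theory Num.Theory.
Local Open Scope ring_scope.
Local Open Scope quotient_scope.

(* Triangles are the elements of a finite type T; triangle t has sides      *)
(* (t,0),(t,1),(t,2) and corners (vertices) v_0,v_1,v_2; side k runs from   *)
(* v_k to v_(k+1 mod 3).  [glue s] is the side glued to s (None: s is a     *)
(* boundary segment).  [twist s] records how the two sides are glued:       *)
(*   twist = false : side k of t from v_k to v_(k+1) is identified with     *)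
(*                   side k' of t' from v_(k'+1) to v_k' (orientation-      *)
(*                   compatible gluing w.r.t. the reference cyclic orders); *)
(*   twist = true  : v_k ~ v_k' and v_(k+1) ~ v_(k'+1) (orientation         *)
(*                   reversing gluing).                                     *)

Definition side (T : finType) := (T * 'I_3)%type.

Record gluing (T : finType) := Gluing {
  glue : side T -> option (side T);
  twist : side T -> bool }.

Definition nxt (k : 'I_3) : 'I_3 := inord (k.+1 %% 3).

Section Surface.
Variables (T : finType) (G : gluing T).

Definition glued (s s' : side T) : bool := glue G s == Some s'.

Definition corner_match (s s' c c' : side T) : bool :=
  let: (t, k) := s in let: (t', k') := s' in
  if twist G s then
    ((c == (t, k)) && (c' == (t', k'))) || ((c == (t, nxt k)) && (c' == (t', nxt k')))
  else
    ((c == (t, k)) && (c' == (t', nxt k'))) || ((c == (t, nxt k)) && (c' == (t', k'))).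

(* corners are identified to the vertex v_k of triangle t, coded as (t,k) *)
Definition corner_adj : rel (side T) :=
  fun c c' => [exists s : side T, exists s' : side T, glued s s' && corner_match s s' c c'].

Definition bdry_corner (c : side T) : bool :=
  [exists s : side T, (glue G s == None) && ((c == s) || (c == (s.1, nxt s.2)))].

Definition tri_adj : rel T :=
  fun t t' => [exists k : 'I_3, exists k' : 'I_3, glued (t, k) (t', k')].

(* [G] is a triangulation (in the sense of the paper: maximal collection of *)
(* compatible quasi-arcs, no one-sided curves) of a connected compact       *)
(* surface with nonempty boundary, all marked points on the boundary (no    *)
(* punctures).                                                              *)
Definition is_triangulation : Prop :=
  [/\
      (forall s s', glue G s = Some s' ->
          [/\ glue G s' = Some s, s' <> s & twist G s' = twist G s]),
      (* two sides of one triangle glued together: the third side is a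
         boundary segment (otherwise the third side would be an arc bounding
         a Moebius strip with one marked point, which is not a quasi-arc) *)
      (forall t k k' l, glue G (t, k) = Some (t, k') -> l != k -> l != k' ->
          glue G (t, l) = None),
      (* no punctures: every vertex lies on the boundary *)
      (forall c : side T, exists c', connect corner_adj c c' && bdry_corner c'),
      (forall t t' : T, connect tri_adj t t')
    & (* not a triangle (the only triangulable excluded case) *)
      (exists s, glue G s <> None)].

(* Edges of the triangulation: a side represents its edge when it is the   *)
(* glued partner with smaller rank (or it is a boundary segment).           *)
Definition erep (s : side T) : side T :=
  match glue G s with
  | Some s' => if (enum_rank s' < enum_rank s)%N then s' else s
  | None => s
  end.

Definition is_edge (s : side T) : bool := erep s == s.
Definition is_arc (s : side T) : bool := is_edge s && (glue G s != None).

(* sides of the cover: (s, sigma); triangle (t,true) carries the cyclic      *)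
(* order 0 -> 1 -> 2, triangle (t,false) the opposite one.                  *)
Definition cglued (c d : side T * bool) : bool :=
  (glue G c.1 == Some d.1) && (d.2 == c.2 (+) twist G c.1).

Definition csame (c d : side T * bool) : bool := (c == d) || cglued c d.

Definition cnext (sg : bool) (k : 'I_3) : 'I_3 := if sg then nxt k else nxt (nxt k).

(* b_{cd} for edges c, d of the cover: arrows c -> d minus arrows d -> c   *)
(* (an arrow i -> j for each triangle in which j follows i).               *)
Definition bcov (c d : side T * bool) : int :=
  \sum_(t : T) \sum_(sg : bool) \sum_(k : 'I_3)
    ((nat_of_bool (csame ((t, k), sg) c && csame ((t, cnext sg k), sg) d))%:Z
   - (nat_of_bool (csame ((t, k), sg) d && csame ((t, cnext sg k), sg) c))%:Z).

(* b_{ij} + b_{\tilde i j}: i an edge of S, j an arc of S (lift (j,true)) *)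
Definition bsum (i j : side T) : int := bcov (i, true) (j, true) + bcov (i, false) (j, true).

(* ---- polynomials: variables x_s indexed by sides; the variable of an    *)
(* edge is x_(erep s).  Coefficients in Z (R = Z[boundary variables]).     *)
Definition nv := #|{: side T}|.
Definition xv (s : side T) : {mpoly int[nv]} := 'X_(enum_rank s).

Definition Fpol (j : side T) : {mpoly int[nv]} :=
  \prod_(i : side T | is_edge i) xv i ^+ (if (0 < bsum i j)%R then `|bsum i j|%N else 0%N)
+ \prod_(i : side T | is_edge i) xv i ^+ (if (bsum i j < 0)%R then `|bsum i j|%N else 0%N).

Definition frac := {fraction {mpoly int[nv]}}.
Definition tofr (p : {mpoly int[nv]}) : frac := @FracField.tofrac _ p.

(* F_j with x_k replaced by F_k / x, the new variable x reusing slot k *)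
Definition subst_exch (k : side T) (P : {mpoly int[nv]}) : frac :=
  mmap (fun c : int => c%:~R : frac)
       (fun l : 'I_nv => if l == enum_rank k then (tofr (Fpol k)) / (tofr (xv k))
                         else (tofr ('X_l : {mpoly int[nv]}))) P.

(* F_k^a divides F_j|_{x_k <- F_k/x} in the Laurent ring
   R[x_1..x_{k-1}, x^{+-1}, x_{k+1}..x_n] (elements of which are H / x^N) *)
Definition lp_divides (a : nat) (k j : side T) : Prop :=
  exists (N : nat) (H : {mpoly int[nv]}),
    subst_exch k (Fpol j) = (tofr (Fpol k ^+ a * H)) / (tofr (xv k ^+ N)).

Definition lp_exp (k j : side T) : nat :=
  epsilon (inhabits 0%N)
    (fun a => lp_divides a k j /\ forall b, lp_divides b k j -> (b <= a)%N).

Definition hatF (j : side T) : frac :=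
  (tofr (Fpol j)) / tofr (\prod_(k : side T | is_arc k && (k != j)) xv k ^+ lp_exp k j).

End Surface.

From HB Require Import structures.
From mathcomp Require Import all_boot all_order all_algebra.
From mathcomp Require Import mpoly fraction.
From mathcomp Require Import zify.
From Stdlib Require Import ClassicalEpsilon.

Set Implicit Arguments.
Unset Strict Implicit.
Unset Printing Implicit Defensive.

Import Order.TTheory GRing.Theory Num.Theory.
Local Open Scope ring_scope.

(* Substituting x_k <- F_k / x_k in the binomial F_j gives N_kj / x_k^|b_kj| for
   an explicit polynomial N_kj ([exch_num]).  If F_k^a divides this with a > 0,
   then N_kj vanishes at every zero of F_k with x_k <> 0.  At a zero of F_k with
   all coordinates nonzero this forces b_kj = 0, and then N_kj = F_j: every such
   zero of F_k is a zero of F_j.  All exponents b_lj lie in [-2, 2], so finitely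
   many test points over F_13 and F_2 show that this containment only happens
   when F_j = F_k; hence a_k = 0 unless F_j = F_k.  Conversely, if F_j = F_k for
   another arc j, no triangle has two sides on the arc k, so x_k does not occur
   in F_k, F_k divides F_j|_{x_k <- F_k / x} exactly once and a_k = 1. *)

Definition pos_exp (z : int) : nat := if 0 < z then `|z|%N else 0.
Definition neg_exp (z : int) : nat := if z < 0 then `|z|%N else 0.

Arguments pos_exp : simpl never.
Arguments neg_exp : simpl never.

Lemma pos_expN z : pos_exp (- z) = neg_exp z.
Proof. by rewrite /pos_exp /neg_exp oppr_gt0 abszN. Qed.

Lemma neg_expN z : neg_exp (- z) = pos_exp z.
Proof. by rewrite /pos_exp /neg_exp oppr_lt0 abszN. Qed.

Lemma abszE_exp z : `|z|%N = (pos_exp z + neg_exp z)%N.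
Proof. by rewrite /pos_exp /neg_exp; have [||->] := ltrgtP z 0; rewrite ?addn0. Qed.

Lemma exps_gt0 z : 0 < z -> pos_exp z = `|z|%N /\ neg_exp z = 0%N.
Proof. by move=> z_gt0; rewrite /pos_exp /neg_exp z_gt0 ltNge ltW. Qed.

Lemma exps_lt0 z : z < 0 -> pos_exp z = 0%N /\ neg_exp z = `|z|%N.
Proof. by move=> z_lt0; rewrite /pos_exp /neg_exp z_lt0 ltNge ltW. Qed.

(* [lbinom1 x b] and [lbinom2 x y b c] are 1 + x^b and 1 + x^b y^c with the
   denominators cleared. *)
Definition lbinom1 (R : comNzRingType) (x : R) (b : int) : R :=
  x ^+ pos_exp b + x ^+ neg_exp b.
Definition lbinom2 (R : comNzRingType) (x y : R) (b c : int) : R :=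
  x ^+ pos_exp b * y ^+ pos_exp c + x ^+ neg_exp b * y ^+ neg_exp c.

Lemma lbinom1_0 (R : comNzRingType) (b : int) : b != 0 -> lbinom1 (0 : R) b = 1.
Proof.
move=> b_neq0; rewrite /lbinom1.
have [b_lt0|b_gt0|b0] := ltrgtP b 0; last by rewrite b0 in b_neq0.
  by have [-> ->] := exps_lt0 b_lt0; rewrite expr0 expr0n absz_eq0 (negbTE b_neq0) addr0.
by have [-> ->] := exps_gt0 b_gt0; rewrite expr0 expr0n absz_eq0 (negbTE b_neq0) add0r.
Qed.

Lemma lbinom1x0 (R : comNzRingType) (x : R) : lbinom1 x 0 = 1 + 1.
Proof. by rewrite /lbinom1 /pos_exp /neg_exp /= expr0. Qed.

Definition small_exps : seq int := [:: -2; -1; 0; 1; 2].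
Definition F13_points : seq 'F_13 := [seq i%:R | i <- [:: 2; 3; 4; 5; 9; 12]%N].

Lemma small_expsP z : -2 <= z <= 2 -> z \in small_exps.
Proof.
case/andP=> z_ge z_le; have : z = -2 \/ z = -1 \/ z = 0 \/ z = 1 \/ z = 2 by lia.
by case=> [->|[->|[->|[->|->]]]].
Qed.

Lemma F13_lbinom1_sep_all : all (fun b => all (fun c =>
    (b != 0) ==> (c != b) ==> (c != - b) ==>
    has (fun x => [&& x != 0, lbinom1 x b == 0 & lbinom1 x c != 0]) F13_points)
  small_exps) small_exps.
Proof. vm_cast_no_check (erefl true). Qed.

Lemma F13_lbinom2_sep_all : all (fun b => all (fun b' => all (fun c => all (fun c' =>
    (b != 0) ==> (b * c' != b' * c) ==>
    has (fun x => has (fun y =>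
      [&& x != 0, y != 0, lbinom2 x y b b' == 0 & lbinom2 x y c c' != 0]) F13_points)
    F13_points) small_exps) small_exps) small_exps) small_exps.
Proof. vm_cast_no_check (erefl true). Qed.

Lemma F13_lbinom1_sep (b c : int) : -2 <= b <= 2 -> -2 <= c <= 2 ->
  b != 0 -> c != b -> c != - b ->
  exists x : 'F_13, [/\ x != 0, lbinom1 x b = 0 & lbinom1 x c != 0].
Proof.
move=> /small_expsP b_small /small_expsP c_small b_neq0 cb cNb.
move/allP: F13_lbinom1_sep_all => /(_ _ b_small) /allP /(_ _ c_small).
rewrite b_neq0 cb cNb => /hasP[x _ /and3P[x_neq0 /eqP bx cx]].
by exists x.
Qed.

Lemma F13_lbinom2_sep (b b' c c' : int) :
  -2 <= b <= 2 -> -2 <= b' <= 2 -> -2 <= c <= 2 -> -2 <= c' <= 2 ->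
  b != 0 -> b * c' != b' * c ->
  exists x y : 'F_13,
    [/\ x != 0, y != 0, lbinom2 x y b b' = 0 & lbinom2 x y c c' != 0].
Proof.
move=> /small_expsP b_small /small_expsP b'_small /small_expsP c_small.
move=> /small_expsP c'_small b_neq0 not_prop.
move/allP: F13_lbinom2_sep_all => /(_ _ b_small) /allP /(_ _ b'_small).
move=> /allP /(_ _ c_small) /allP /(_ _ c'_small).
rewrite b_neq0 not_prop => /hasP[x _ /hasP[y _ /and4P[x_neq0 y_neq0 /eqP bxy cxy]]].
by exists x, y.
Qed.

Lemma F2_add11 : 1 + 1 = 0 :> 'F_2.
Proof. by apply/eqP. Qed.

HB.instance Definition _ (T : finType) :=
  GRing.RMorphism.copy (@tofr T) (@FracField.tofrac _).

Lemma tofr_inj {T : finType} : injective (@tofr T).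
Proof. by move=> p q /eqP; rewrite /tofr tofrac_eq => /eqP. Qed.

Lemma tofr_neq0 {T : finType} (p : {mpoly int[nv T]}) : p != 0 -> tofr p != 0.
Proof. by rewrite /tofr tofrac_eq0. Qed.

Section Evaluation.
Variable T : finType.
Local Notation nv := (nv T).

Definition ev (S : comNzRingType) (h : side T -> S) (p : {mpoly int[nv]}) : S :=
  mmap intr (h \o enum_val) p.

HB.instance Definition _ (S : comNzRingType) (h : side T -> S) :=
  GRing.RMorphism.copy (ev h) (mmap intr (h \o enum_val)).

Lemma ev_xv (S : comNzRingType) (h : side T -> S) l : ev h (xv l) = h l.
Proof. by rewrite /ev /xv mmapX mmap1U /= enum_rankK. Qed.

Definition point1 (S : comNzRingType) (v : side T) (x : S) : side T -> S :=
  fun l => if l == v then x else 1.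
Definition point2 (S : comNzRingType) (v u : side T) (x y : S) : side T -> S :=
  fun l => if l == v then x else if l == u then y else 1.

Lemma point1_neq0 (S : idomainType) v (x : S) l : x != 0 -> point1 v x l != 0.
Proof. by move=> x_neq0; rewrite /point1; case: ifP => // _; exact: oner_neq0. Qed.

Lemma point2_neq0 (S : idomainType) v u (x y : S) l :
  x != 0 -> y != 0 -> point2 v u x y l != 0.
Proof.
move=> x_neq0 y_neq0; rewrite /point2.
by case: ifP => // _; case: ifP => // _; exact: oner_neq0.
Qed.

Lemma prod_point1 (S : comNzRingType) (P : pred (side T)) v (x : S) e :
  P v -> \prod_(l | P l) point1 v x l ^+ e l = x ^+ e v.
Proof.
move=> Pv; rewrite (bigD1 v) //= /point1 eqxx big1 ?mulr1 // => l /andP[_ /negbTE ->].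
exact: expr1n.
Qed.

Lemma prod_point2 (S : comNzRingType) (P : pred (side T)) v u (x y : S) e :
  P v -> P u -> u != v ->
  \prod_(l | P l) point2 v u x y l ^+ e l = x ^+ e v * y ^+ e u.
Proof.
move=> Pv Pu uv; rewrite (bigD1 v) //= (bigD1 u) /=; last by rewrite Pu uv.
rewrite /point2 eqxx (negbTE uv) eqxx mulrA big1 ?mulr1 //.
by move=> l /andP[/andP[_ /negbTE ->] /negbTE ->]; rewrite expr1n.
Qed.

Lemma xv_neq0 l : xv l != 0 :> {mpoly int[nv]}.
Proof.
apply/eqP => /(congr1 (ev (point1 l (2 : int)))).
by rewrite ev_xv rmorph0 /point1 eqxx.
Qed.

Lemma prod_xv_eq1 (P : pred (side T)) (e : side T -> nat) :
  \prod_(l | P l) xv l ^+ e l = 1 <-> forall l, P l -> e l = 0%N.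
Proof.
split=> [prod_eq1 l Pl | e0]; last by rewrite big1 // => l /e0 ->.
have /(congr1 (ev (point1 l (2 : int)))) := prod_eq1.
rewrite rmorph1 rmorph_prod /=; under eq_bigr do rewrite rmorphXn /= ev_xv.
rewrite prod_point1 //; case: (e l) => // n /eqP.
by rewrite eq_sym lt_eqF // exprn_egt1.
Qed.

End Evaluation.

(** * The exchange substitution x_k <- F_k / x_k *)

Section Exchange.
Variables (T : finType) (G : gluing T).
Local Notation nv := (nv T).
Local Notation b := (bsum G).

Lemma FpolE j : Fpol G j =
  \prod_(l | is_edge G l) xv l ^+ pos_exp (b l j)
  + \prod_(l | is_edge G l) xv l ^+ neg_exp (b l j).
Proof. by []. Qed.

Lemma ev_Fpol (S : comNzRingType) (h : side T -> S) j : ev h (Fpol G j) =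
  \prod_(l | is_edge G l) h l ^+ pos_exp (b l j)
  + \prod_(l | is_edge G l) h l ^+ neg_exp (b l j).
Proof.
by rewrite FpolE rmorphD !rmorph_prod; congr (_ + _); apply: eq_bigr => l _;
  rewrite rmorphXn /= ev_xv.
Qed.

Lemma ev_Fpol_point1 (S : comNzRingType) v (x : S) j :
  is_edge G v -> ev (point1 v x) (Fpol G j) = lbinom1 x (b v j).
Proof. by move=> Ev; rewrite ev_Fpol !prod_point1. Qed.

Lemma ev_Fpol_point2 (S : comNzRingType) v u (x y : S) j :
  is_edge G v -> is_edge G u -> u != v ->
  ev (point2 v u x y) (Fpol G j) = lbinom2 x y (b v j) (b u j).
Proof. by move=> Ev Eu uv; rewrite ev_Fpol !prod_point2. Qed.

Lemma Fpol_neq0 j : Fpol G j != 0.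
Proof.
apply/eqP => /(congr1 (ev (fun=> (1 : int)))).
by rewrite ev_Fpol rmorph0 !big1 // => l _; rewrite expr1n.
Qed.

Lemma Fpol_eq_exps i k :
  (forall l, is_edge G l -> b l i = b l k) -> Fpol G i = Fpol G k.
Proof.
move=> bik; rewrite !FpolE.
by apply: congr2; apply: eq_bigr => l /bik ->.
Qed.

Lemma Fpol_eq_exps_opp i k :
  (forall l, is_edge G l -> b l i = - b l k) -> Fpol G i = Fpol G k.
Proof.
move=> bik; rewrite !FpolE addrC.
by apply: congr2; apply: eq_bigr => l /bik ->; rewrite ?pos_expN ?neg_expN.
Qed.

Definition exch_num (k j : side T) : {mpoly int[nv]} :=
  Fpol G k ^+ pos_exp (b k j)
    * \prod_(l | is_edge G l && (l != k)) xv l ^+ pos_exp (b l j)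
    * xv k ^+ neg_exp (b k j)
  + Fpol G k ^+ neg_exp (b k j)
    * \prod_(l | is_edge G l && (l != k)) xv l ^+ neg_exp (b l j)
    * xv k ^+ pos_exp (b k j).

Lemma subst_exchE k j : is_edge G k ->
  subst_exch G k (Fpol G j) = tofr (exch_num k j) / tofr (xv k ^+ `|b k j|).
Proof.
move=> Ek; set y := tofr (xv k); set F := tofr (Fpol G k).
pose phi (l : 'I_nv) := if l == enum_rank k then F / y else tofr 'X_l.
have -> : subst_exch G k (Fpol G j) = mmap intr phi (Fpol G j) by [].
have subst_xv l e :
    mmap intr phi (xv l ^+ e) = (if l == k then F / y else tofr (xv l)) ^+ e.
  by rewrite rmorphXn /= mmapX mmap1U /phi (inj_eq enum_rank_inj); case: eqP => // ->.
have subst_prod (e : side T -> nat) :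
    \prod_(l | is_edge G l && (l != k)) mmap intr phi (xv l ^+ e l)
    = \prod_(l | is_edge G l && (l != k)) tofr (xv l) ^+ e l.
  by apply: eq_bigr => l /andP[_ /negbTE lk]; rewrite subst_xv lk.
have tofr_prod (e : side T -> nat) :
    tofr (\prod_(l | is_edge G l && (l != k)) xv l ^+ e l)
    = \prod_(l | is_edge G l && (l != k)) tofr (xv l) ^+ e l.
  by rewrite rmorph_prod; apply: eq_bigr => l _; rewrite rmorphXn.
rewrite FpolE rmorphD !rmorph_prod !(bigD1 k Ek) /= !subst_xv eqxx !subst_prod.
rewrite /exch_num rmorphD !rmorphM /= !tofr_prod !rmorphXn /= -/y -/F.
rewrite abszE_exp exprD !expr_div_n.
have y_neq0 : y != 0 := tofr_neq0 (xv_neq0 k).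
by rewrite [_ / _ * _]mulrAC [_ / _ * _]mulrAC addf_div ?expf_neq0.
Qed.

Lemma lp_divides_exch a k j : is_edge G k -> lp_divides G a k j <->
  exists N H, exch_num k j * xv k ^+ N = Fpol G k ^+ a * H * xv k ^+ `|b k j|.
Proof.
move=> Ek; have xpow_neq0 n : tofr (xv k ^+ n) != 0.
  by rewrite tofr_neq0 ?expf_neq0 ?xv_neq0.
have cross_mulE N H :
    (tofr (exch_num k j) / tofr (xv k ^+ `|b k j|)
       == tofr (Fpol G k ^+ a * H) / tofr (xv k ^+ N))
    = (exch_num k j * xv k ^+ N == Fpol G k ^+ a * H * xv k ^+ `|b k j|).
  by rewrite eqr_div // -(inj_eq tofr_inj) !rmorphM.
rewrite /lp_divides subst_exchE //.
split=> -[N [H /eqP eqNH]]; exists N, H; apply/eqP.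
  by rewrite -cross_mulE.
by rewrite cross_mulE.
Qed.

Lemma exch_num_id k j : is_edge G k -> b k j = 0 -> exch_num k j = Fpol G j.
Proof.
move=> Ek bkj; rewrite /exch_num [Fpol G j]FpolE !(bigD1 k Ek) /= bkj.
have [-> ->] : (pos_exp 0 = 0 /\ neg_exp 0 = 0)%N by [].
by rewrite !expr0 !mulr1 !mul1r.
Qed.

Lemma lp_divides0 k j : is_edge G k -> lp_divides G 0 k j.
Proof.
move=> Ek; apply/(lp_divides_exch _ _ Ek).
by exists `|b k j|%N, (exch_num k j); rewrite mul1r.
Qed.

Lemma ev_exch_num (S : comNzRingType) (h : side T -> S) k j :
  ev h (exch_num k j) =
    ev h (Fpol G k) ^+ pos_exp (b k j)
      * \prod_(l | is_edge G l && (l != k)) h l ^+ pos_exp (b l j) * h k ^+ neg_exp (b k j)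
    + ev h (Fpol G k) ^+ neg_exp (b k j)
      * \prod_(l | is_edge G l && (l != k)) h l ^+ neg_exp (b l j) * h k ^+ pos_exp (b k j).
Proof.
rewrite /exch_num rmorphD !rmorphM !rmorph_prod /= !rmorphXn /= !ev_xv.
by apply: congr2; do 2!apply: congr2 => //; apply: eq_bigr => l _; rewrite rmorphXn /= ev_xv.
Qed.

Section PositiveExponent.
Variables (a : nat) (k j : side T) (S : idomainType) (h : side T -> S).
Hypotheses (Ek : is_edge G k) (lp_div : lp_divides G a k j) (a_gt0 : (0 < a)%N).
Hypotheses (hk_neq0 : h k != 0) (Fk_root : ev h (Fpol G k) = 0).

Lemma ev_exch_num_root : ev h (exch_num k j) = 0.
Proof.
have [N [H /(congr1 (ev h))]] := (lp_divides_exch _ _ Ek).1 lp_div.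
rewrite !rmorphM /= !rmorphXn /= ev_xv Fk_root expr0n eqn0Ngt a_gt0 !mul0r => /eqP.
by rewrite mulf_eq0 expf_eq0 (negbTE hk_neq0) andbF orbF => /eqP.
Qed.

Lemma bsum_eq0_of_lp_divides : (forall l, h l != 0) -> b k j = 0.
Proof.
move=> h_neq0; have := ev_exch_num_root; rewrite ev_exch_num Fk_root.
have prod_neq0 (e : side T -> nat) : \prod_(l | is_edge G l && (l != k)) h l ^+ e l != 0.
  by rewrite prodf_seq_neq0; apply/allP => l _; apply/implyP => _; rewrite expf_neq0.
have [bkj_lt0|bkj_gt0|//] := ltrgtP (b k j) 0.
  have [-> ->] := exps_lt0 bkj_lt0.
  rewrite !expr0 expr0n absz_eq0 (negbTE (ltr0_neq0 bkj_lt0)) !mul0r addr0 mul1r => /eqP.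
  by rewrite mulf_eq0 (negbTE (prod_neq0 _)) expf_eq0 (negbTE (h_neq0 k)) andbF.
have [-> ->] := exps_gt0 bkj_gt0.
rewrite !expr0 expr0n absz_eq0 (negbTE (lt0r_neq0 bkj_gt0)) !mul0r add0r mul1r => /eqP.
by rewrite mulf_eq0 (negbTE (prod_neq0 _)) expf_eq0 (negbTE (h_neq0 k)) andbF.
Qed.

Lemma Fpol_root_of_lp_divides : b k j = 0 -> ev h (Fpol G j) = 0.
Proof. by move=> bkj; rewrite -(exch_num_id Ek bkj) ev_exch_num_root. Qed.

End PositiveExponent.

End Exchange.

(** * Combinatorics of the triangulation *)

Local Notation ind b := (Posz (nat_of_bool b)).

Lemma nxtE k : nat_of_ord (nxt k) = (k.+1 %% 3)%N.
Proof. by rewrite /nxt inordK // ltn_pmod. Qed.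

Lemma cnext_inj sg : injective (cnext sg).
Proof.
have nxt_inj : injective nxt.
  move=> m m' /(congr1 val); rewrite /= !nxtE => eq_mod; apply/val_inj => /=.
  by move: (ltn_ord m) (ltn_ord m') eq_mod; lia.
by case: sg => m m' /=; [exact: nxt_inj | move/nxt_inj/nxt_inj].
Qed.

Lemma cnext_neq sg m : cnext sg m != m.
Proof.
by apply/eqP => /(congr1 val); case: sg; rewrite /= ?nxtE; move: (ltn_ord m); lia.
Qed.

Section CoverSides.
Variables (T : finType) (G : gluing T).

Definition cover_next (c : side T * bool) : side T * bool :=
  ((c.1.1, cnext c.2 c.1.2), c.2).

Lemma cover_next_inj : injective cover_next.
Proof.
move=> [[t m] sg] [[t' m'] sg'] /= [-> eq_m eq_sg]; subst sg'.
by rewrite (cnext_inj eq_m).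
Qed.

Lemma sum_cover_sides (F : side T * bool -> int) :
  \sum_(t : T) \sum_(sg : bool) \sum_(m : 'I_3) F ((t, m), sg) = \sum_c F c.
Proof.
transitivity (\sum_(t : T) \sum_(m : 'I_3) \sum_(sg : bool) F ((t, m), sg)).
  by apply: eq_bigr => t _; exact: exchange_big.
by rewrite pair_bigA pair_bigA; apply: eq_bigr => -[[]].
Qed.

Lemma bcovE c d : bcov G c d =
  \sum_e (ind (csame G e c && csame G (cover_next e) d)
          - ind (csame G e d && csame G (cover_next e) c)).
Proof. by rewrite -sum_cover_sides. Qed.

Lemma csame_side c s sg : csame G c (s, sg) -> c.1 = s \/ glue G c.1 = Some s.
Proof. by case/orP => [/eqP -> | /andP[/eqP ? _]]; [left | right]. Qed.

Lemma bcov_diag c : bcov G c c = 0.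
Proof. by rewrite bcovE big1 // => e _; rewrite subrr. Qed.

End CoverSides.

Lemma ind_term_bounds (x x' a b a' b' : bool) : ~~ (a && b) -> ~~ (a' && b') ->
  - ind x <= ind (a && x') - ind (x && a') + (ind (b && x') - ind (x && b')) <= ind x'.
Proof. by case: a b x a' b' x' => [] [] [] [] [] []. Qed.

Section Triangulation.
Variables (T : finType) (G : gluing T).
Hypothesis HG : is_triangulation G.

Lemma glue_invol s s' : glue G s = Some s' ->
  [/\ glue G s' = Some s, s' <> s & twist G s' = twist G s].
Proof. by case: HG => invol _ _ _ _; exact: invol. Qed.

Lemma glue_inj s s' s'' : glue G s = Some s'' -> glue G s' = Some s'' -> s = s'.
Proof. by move=> /glue_invol[gs _ _] /glue_invol[gs' _ _]; move: gs; rewrite gs' => -[]. Qed.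

Lemma csame_lifts_excl c l : ~~ (csame G c (l, true) && csame G c (l, false)).
Proof.
apply/negP => /andP[]; rewrite /csame /cglued.
case/orP => [/eqP e1|/andP[/eqP g1 /eqP t1]]; case/orP => [/eqP e2|/andP[/eqP g2 /eqP t2]].
- by rewrite e1 in e2.
- by subst c; have [_ h _] := glue_invol g2.
- by subst c; have [_ h _] := glue_invol g1.
- by move: t2; rewrite -t1.
Qed.

Lemma sum_csame_le2 j : \sum_c ind (csame G c (j, true)) <= 2.
Proof.
pose j' := if glue G j is Some s then (s, true (+) twist G s) else (j, true).
have csame_le c : ind (csame G c (j, true)) <= ind (c == (j, true)) + ind (c == j').
  rewrite /csame; case: eqP => [_|_ /=]; first by rewrite lerDl.
  case: c => s sg; case/boolP: (cglued G (s, sg) (j, true)) => //=.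
  case/andP=> /eqP gs /eqP /= sgE.
  have [gj _ _] := glue_invol gs.
  by rewrite /j' gj sgE addbK eqxx lerDr.
have sum_eq1 c0 : \sum_c ind (c == c0) = 1.
  by rewrite (bigD1 c0) //= eqxx big1 ?addr0 // => c /negbTE ->.
apply: le_trans (ler_sum _ (fun c _ => csame_le c)) _.
by rewrite big_split /= !sum_eq1.
Qed.

Lemma bsum_bound l j : -2 <= bsum G l j <= 2.
Proof.
pose J c := ind (csame G c (j, true)).
have sumJ : \sum_c J c <= 2 := sum_csame_le2 j.
have sumJ_next : \sum_c J (cover_next c) <= 2.
  by move: sumJ; rewrite (reindex_inj (@cover_next_inj T)).
have term_bounds c :=
  ind_term_bounds (csame G c (j, true)) (csame G (cover_next c) (j, true))
    (csame_lifts_excl c l) (csame_lifts_excl (cover_next c) l).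
rewrite /bsum !bcovE -big_split /=; apply/andP; split.
  apply: (@le_trans _ _ (- \sum_c J c)); first by rewrite lerN2.
  rewrite -sumrN; apply: ler_sum => c _.
  by case/andP: (term_bounds c).
apply: le_trans sumJ_next; apply: ler_sum => c _.
by case/andP: (term_bounds c).
Qed.

Lemma edges_not_glued s s' : is_edge G s -> is_edge G s' -> glue G s <> Some s'.
Proof.
move=> Es Es' gs; have [gs' s's _] := glue_invol gs.
move: Es Es'; rewrite /is_edge /erep gs gs'.
case: ltnP => [_ /eqP // | le_s_s']; case: ltnP => [_ _ /eqP/esym // | le_s'_s _ _].
by apply/s's/enum_rank_inj/val_inj/eqP; rewrite eqn_leq le_s_s' le_s'_s.
Qed.

Lemma self_glued_arc_unique t m m' i k :
  glue G (t, m) = Some (t, m') -> is_arc G i -> is_arc G k -> i = k.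
Proof.
move=> gm; have [gm' m'm _] := glue_invol gm.
case: HG => _ third_bdry _ connected _.
have other_bdry l : l != m -> l != m' -> glue G (t, l) = None := third_bdry t m m' l gm.
have adj_t t' : tri_adj G t t' -> t' = t.
  case/existsP => l /existsP[l' /eqP gl].
  have [lm|lm] := eqVneq l m; first by move: gl; rewrite lm gm => -[].
  have [lm'|lm'] := eqVneq l m'; first by move: gl; rewrite lm' gm' => -[].
  by move: gl; rewrite other_bdry.
have arc_side s : is_arc G s -> s = (t, m) \/ s = (t, m').
  case: s => ts ms /andP[_].
  have -> : ts = t.
    have /connectP[p + ->] := connected t ts.
    by elim: p => //= t' p IH /andP[/adj_t -> /IH].
  have [->|msm] := eqVneq ms m; first by left.
  have [->|msm'] := eqVneq ms m'; first by right.
  by rewrite other_bdry.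
move=> /[dup] /arc_side si /andP[Ei _] /[dup] /arc_side sk /andP[Ek _].
case: si sk Ei Ek => -> [] -> // Ei Ek.
  by case: (edges_not_glued Ei Ek gm).
by case: (edges_not_glued Ei Ek gm').
Qed.

Lemma csame_cover_next c k sg sg' :
  csame G c (k, sg) -> csame G (cover_next c) (k, sg') -> glue G c.1 = Some (cover_next c).1.
Proof.
case: c => -[t m] s /csame_side /= + /csame_side /=.
have next_neq : (t, cnext s m) <> (t, m).
  by move=> [] /eqP; rewrite (negbTE (cnext_neq s m)).
case=> [<-|gk] [ek|gk'].
- by case: next_neq.
- by have [] := glue_invol gk'.
- by rewrite ek.
- by case: next_neq; apply: glue_inj gk' gk.
Qed.

(* A second arc i rules out a triangle with two sides on k, so x_k does not
   occur in F_k. *)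
Lemma bsum_diag k i : is_arc G k -> is_arc G i -> i != k -> bsum G k k = 0.
Proof.
move=> Ak Ai ik; rewrite /bsum bcov_diag add0r bcovE big1 // => c _.
suff no_loop sg sg' : ~~ (csame G c (k, sg) && csame G (cover_next c) (k, sg')).
  by rewrite !(negbTE (no_loop _ _)) subrr.
apply/negP => /andP[c_k next_k]; have := csame_cover_next c_k next_k.
case: c {c_k next_k} => -[t m] s /= gm.
by move/eqP: ik; apply; apply: self_glued_arc_unique gm Ai Ak.
Qed.

End Triangulation.

(** * Zeros of the binomials and the normalisation exponents *)

Section Normalisation.
Variables (T : finType) (G : gluing T).
Local Notation b := (bsum G).

Lemma lp_expE k j a : lp_divides G a k j ->
  (forall a', lp_divides G a' k j -> (a' <= a)%N) -> lp_exp G k j = a.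
Proof.
move=> div_a max_a; rewrite /lp_exp.
set P := fun a => _ /\ _.
have [div_e max_e] := epsilon_spec (inhabits 0%N) P (ex_intro P a (conj div_a max_a)).
by apply/eqP; rewrite eqn_leq max_a // max_e.
Qed.

Lemma hatF_eq_Fpol j : hatF G j = tofr (Fpol G j) <->
  (forall k, is_arc G k -> k != j -> lp_exp G k j = 0%N).
Proof.
have F_neq0 := tofr_neq0 (Fpol_neq0 G j).
transitivity (\prod_(k | is_arc G k && (k != j)) xv k ^+ lp_exp G k j = 1).
  rewrite /hatF; split=> [|->]; last by rewrite rmorph1 divr1.
  move/eqP; rewrite -[X in _ == X]mulr1 (inj_eq (mulfI F_neq0)) invr_eq1.
  by rewrite rmorph_eq1 => [/eqP|]; last exact: tofr_inj.
rewrite prod_xv_eq1; split=> [exps0 k Ak kj | exps0 k /andP[]]; last exact: exps0.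
by apply: exps0; rewrite Ak kj.
Qed.

Hypothesis HG : is_triangulation G.

Lemma Fpol_torus_root k : exists (S : idomainType) (h : side T -> S),
  (forall l, h l != 0) /\ ev h (Fpol G k) = 0.
Proof.
have [v /andP[Ev bvk]|b0] := pickP (fun v => is_edge G v && (b v k != 0)).
  have [x [x_neq0 root _]] :
      exists x : 'F_13, [/\ x != 0, lbinom1 x (b v k) = 0 & lbinom1 x 0 != 0].
    by apply: (F13_lbinom1_sep (bsum_bound HG v k) _ bvk); rewrite // eq_sym ?oppr_eq0.
  exists 'F_13, (point1 v x); split=> [l|]; first exact: point1_neq0.
  by rewrite ev_Fpol_point1.
exists 'F_2, (fun=> 1); split=> [_|]; first exact: oner_neq0.
by rewrite ev_Fpol !big1 ?F2_add11 // => l _; rewrite expr1n.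
Qed.

Section RootsContainment.
Variables (k i : side T).
Hypothesis bki : b k i = 0.
Hypothesis roots_sub : forall (S : idomainType) (h : side T -> S),
  h k != 0 -> ev h (Fpol G k) = 0 -> ev h (Fpol G i) = 0.

Lemma Fpol_eq_of_roots_sub_const :
  (forall l, is_edge G l -> b l k = 0) -> Fpol G i = Fpol G k.
Proof.
move=> bk0; apply: Fpol_eq_exps => l El; rewrite (bk0 _ El).
apply/eqP/negPn/negP => bli.
have lk : k != l by apply: contra_neq bli => <-.
(* The test point may have a zero coordinate other than x_k. *)
have hk : point1 l (0 : 'F_2) k != 0 by rewrite /point1 (negbTE lk) oner_neq0.
have root_k : ev (point1 l (0 : 'F_2)) (Fpol G k) = 0.
  by rewrite (ev_Fpol_point1 _ _ El) (bk0 _ El) lbinom1x0 F2_add11.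
have := roots_sub hk root_k.
by rewrite (ev_Fpol_point1 _ _ El) (lbinom1_0 _ bli) => /eqP; rewrite oner_eq0.
Qed.

Lemma Fpol_eq_of_roots_sub : Fpol G i = Fpol G k.
Proof.
have [v /andP[Ev bvk]|bk0] := pickP (fun v => is_edge G v && (b v k != 0)); last first.
  by apply: Fpol_eq_of_roots_sub_const => l El; have := bk0 l; rewrite El => /negbFE/eqP.
have bnd l j := bsum_bound HG l j.
have [u /andP[Eu not_prop]|prop] :=
  pickP (fun u => is_edge G u && (b v k * b u i != b u k * b v i)).
  have uv : u != v by apply: contraNneq not_prop => ->; rewrite mulrC.
  have [x [y [x_neq0 y_neq0 root nroot]]] :=
    F13_lbinom2_sep (bnd v k) (bnd u k) (bnd v i) (bnd u i) bvk not_prop.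
  have root_k : ev (point2 v u x y) (Fpol G k) = 0.
    by rewrite (ev_Fpol_point2 _ _ _ Ev Eu uv).
  exfalso; have := roots_sub (point2_neq0 v u k x_neq0 y_neq0) root_k.
  by rewrite (ev_Fpol_point2 _ _ _ Ev Eu uv) => /eqP; rewrite (negbTE nroot).
have {}prop l : is_edge G l -> b v k * b l i = b l k * b v i.
  by move=> El; have := prop l; rewrite El => /negbFE/eqP.
have [bvi|bvi] := eqVneq (b v i) (b v k).
  by apply: Fpol_eq_exps => l El; apply: (mulfI bvk); rewrite (prop _ El) bvi mulrC.
have [bvNi|bvNi] := eqVneq (b v i) (- b v k).
  apply: Fpol_eq_exps_opp => l El; apply: (mulfI bvk).
  by rewrite (prop _ El) bvNi mulrN mulrC -mulrN.
have [x [x_neq0 root nroot]] := F13_lbinom1_sep (bnd v k) (bnd v i) bvk bvi bvNi.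
have root_k : ev (point1 v x) (Fpol G k) = 0 by rewrite (ev_Fpol_point1 _ _ Ev).
exfalso; have := roots_sub (point1_neq0 v k x_neq0) root_k.
by rewrite (ev_Fpol_point1 _ _ Ev) => /eqP; rewrite (negbTE nroot).
Qed.

End RootsContainment.

Lemma Fpol_eq_of_lp_divides a k i : is_edge G k ->
  lp_divides G a k i -> (0 < a)%N -> Fpol G i = Fpol G k.
Proof.
move=> Ek lp_div a_gt0; have [S [h [h_neq0 root]]] := Fpol_torus_root k.
have bki := bsum_eq0_of_lp_divides Ek lp_div a_gt0 (h_neq0 k) root h_neq0.
apply: (Fpol_eq_of_roots_sub bki) => S' h' hk_neq0 root'.
exact: Fpol_root_of_lp_divides Ek lp_div a_gt0 hk_neq0 root' bki.
Qed.

Lemma lp_exp_eq0 k i : is_edge G k -> Fpol G i <> Fpol G k -> lp_exp G k i = 0%N.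
Proof.
move=> Ek Fik; apply: lp_expE => [|a lp_div]; first exact: (lp_divides0 _ Ek).
rewrite leqn0; apply/negPn/negP; rewrite -lt0n => a_gt0.
exact: Fik (Fpol_eq_of_lp_divides Ek lp_div a_gt0).
Qed.

Lemma lp_exp_eq1 k i : is_arc G k -> is_arc G i -> i != k ->
  Fpol G i = Fpol G k -> lp_exp G k i = 1%N.
Proof.
move=> Ak Ai ik Fik; have Ek := proj1 (andP Ak).
have bkk := bsum_diag HG Ak Ai ik; have exch_kk := exch_num_id Ek bkk.
have {Fik} divE a : lp_divides G a k i <-> lp_divides G a k k.
  by rewrite /lp_divides Fik.
apply: lp_expE => [|a /(divE a).1 /(lp_divides_exch _ _ Ek)[N [H]]].
  apply/(divE 1).2/(lp_divides_exch _ _ Ek); exists 0%N, 1.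
  by rewrite exch_kk bkk absz0 !expr0 expr1 !mulr1.
rewrite exch_kk bkk absz0 mulr1; case: a => [//|[//|a]] eqNH.
have [S [h [h_neq0 root]]] := Fpol_torus_root k.
have /(congr1 (ev h)) : xv k ^+ N = Fpol G k ^+ a.+1 * H.
  by apply: (mulfI (Fpol_neq0 G k)); rewrite eqNH exprS mulrA.
rewrite rmorphM rmorphXn /= rmorphXn /= ev_xv root expr0n mul0r => /eqP.
by rewrite expf_eq0 (negbTE (h_neq0 k)) andbF.
Qed.

End Normalisation.

Theorem lemma4p12 (T : finType) (G : gluing T) (HG : is_triangulation G)
    (i : side T) (Hi : is_arc G i) :
  hatF G i = tofr (Fpol G i) <->
  (forall j : side T, is_arc G j -> j != i -> Fpol G i <> Fpol G j).
Proof.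
rewrite hatF_eq_Fpol; split=> [exps0 j Aj ji Fij | Fneq k Ak ki].
  have ij : i != j by rewrite eq_sym.
  by move: (exps0 j Aj ji); rewrite (lp_exp_eq1 HG Aj Hi ij Fij).
exact: (lp_exp_eq0 HG (proj1 (andP Ak)) (Fneq k Ak ki)).
Qed.
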